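(* Let $\mathcal{A}=(Q,\delta,I,F)$ be a complete Büchi automaton with delayed simulation $\preceq_{\mathit{de}}$, and let $p,q,r\in Q$, $a\in\Sigma$ be such that $q\in\delta(r,a)$ and $p\preceq_{\mathit{de}}q$. Let $\mathcal{A}'=(Q,\delta',I,F)$ where $\delta'=\delta\cup\{r\xrightarrow{a}p\}$. Then $\preceq_{\mathit{de}}$ is included in the delayed simulation on $\mathcal{A}'$.
   Context: A Büchi automaton is $\mathcal{A}=(Q,\delta,I,F)$ over a finite alphabet $\Sigma$ with $\delta:Q\times\Sigma\to2^Q$, complete if $\delta(q,a)\ne\emptyset$ always; $r\xrightarrow{a}p\in\delta$ means $p\in\delta(r,a)$, and $\delta\cup\{r\xrightarrow{a}p\}$ denotes the transition function obtained by adding $p$ to $\delta(r,a)$. Delayed simulation on a BA: in the game from $(p_0,r_0)$, in round $i$ Spoiler picks a transition $p_i\xrightarrow{\alpha_i}p_{i+1}$ of the automaton and Duplicator answers with a transition $r_i\xrightarrow{\alpha_i}r_{i+1}$ on the same symbol; a Duplicator strategy is a map $\sigma$ with $\sigma(r,p\xrightarrow{a}p')$ a successor of $r$ under $a$ (no lookahead). Duplicator wins if for all $i$, $p_i\in F$ implies $r_k\in F$ for some $k\ge i$. The delayed simulation relates $(p,r)$ iff Duplicator has a winning strategy from $(p,r)$. *)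

From mathcomp Require Import all_boot.
Set Implicit Arguments. Unset Strict Implicit. Unset Printing Implicit Defensive.

Record BA (Q Sigma : finType) := mkBA {
  delta : Q -> Sigma -> {set Q};
  init  : {set Q};
  final : {set Q} }.

Definition complete (Q Sigma : finType) (A : BA Q Sigma) : Prop :=
  forall (q : Q) (a : Sigma), delta A q a != set0.

Definition add_trans (Q Sigma : finType) (d : Q -> Sigma -> {set Q})
  (r : Q) (a : Sigma) (p : Q) : Q -> Sigma -> {set Q} :=
  fun s b => if (s == r) && (b == a) then p |: d s b else d s b.

Definition add_transition (Q Sigma : finType) (A : BA Q Sigma)
  (r : Q) (a : Sigma) (p : Q) : BA Q Sigma :=
  mkBA (add_trans (delta A) r a p) (init A) (final A).

(* A Duplicator strategy (no lookahead): given the history of previous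
   positions [(p_0,r_0);...;(p_{i-1},r_{i-1})], the current position (p_i,r_i)
   and Spoiler's move p_i -a-> p', it returns Duplicator's answer r_{i+1}. *)
Definition strategy (Q Sigma : finType) :=
  seq (Q * Q) -> Q -> Q -> Sigma -> Q -> Q.

Fixpoint dup_run (Q Sigma : finType) (sigma : strategy Q Sigma)
  (ps : nat -> Q) (als : nat -> Sigma) (r0 : Q) (n : nat) : seq (Q * Q) * Q :=
  match n with
  | 0 => ([::], r0)
  | n'.+1 =>
      let hr := dup_run sigma ps als r0 n' in
      (rcons hr.1 (ps n', hr.2), sigma hr.1 (ps n') hr.2 (als n') (ps n))
  end.

Definition delayed_winning (Q Sigma : finType) (A : BA Q Sigma)
  (sigma : strategy Q Sigma) (p0 r0 : Q) : Prop :=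
  forall (ps : nat -> Q) (als : nat -> Sigma),
    ps 0 = p0 ->
    (forall i, ps i.+1 \in delta A (ps i) (als i)) ->
    let rs := fun n => (dup_run sigma ps als r0 n).2 in
    (forall i, rs i.+1 \in delta A (rs i) (als i)) /\
    (forall i, ps i \in final A -> exists k, i <= k /\ rs k \in final A).

Definition delayed_sim (Q Sigma : finType) (A : BA Q Sigma) (p r : Q) : Prop :=
  exists sigma : strategy Q Sigma, delayed_winning A sigma p r.

From Stdlib Require Import Classical ClassicalEpsilon.
From mathcomp Require Import all_boot.
Set Implicit Arguments. Unset Strict Implicit. Unset Printing Implicit Defensive.

(* Duplicator plays in the extended automaton as in A, except that a Spoiler
   move along the new edge r -a-> p is answered as if Spoiler had moved to q,
   and p <=de q is composed in from then on.  Since the new edge may be taken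
   infinitely often, these compositions alone could postpone a final state of
   Duplicator forever.  Duplicator therefore keeps one bit of memory, the
   pending obligation, and while it is set plays moves that decrease a rank:
   a position (s, t) won with an obligation and t non-final has a finite rank
   (otherwise, Q and Sigma being finite, Spoiler could keep Duplicator away
   from final states forever), and composing with p <=de q on the left does
   not increase ranks. *)

Lemma ex_minP (P : nat -> Prop) :
  (exists n, P n) -> exists2 n, P n & forall m, P m -> n <= m.
Proof.
have bP n : reflect (P n) (excluded_middle_informative (P n)).
  by case: excluded_middle_informative; constructor.
move=> [n Pn]; have exP : exists n, excluded_middle_informative (P n) by exists n; apply/bP.
by case: (ex_minnP exP) => k /bP Pk mink; exists k => // m /bP /mink.
Qed.

Lemma fin_uniform_bound (T : finType) (P : T -> nat -> Prop) :
  (forall x k k', k <= k' -> P x k -> P x k') ->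
  (forall x, exists k, P x k) -> exists K, forall x, P x K.
Proof.
move=> mono bound.
suff [K PK] : exists K, forall x, x \in enum T -> P x K.
  by exists K => x; apply: PK; rewrite mem_enum.
elim: (enum T) => [|x s [K PK]]; first by exists 0.
have [k Pk] := bound x; exists (maxn k K) => y; rewrite inE => /predU1P [->|ys].
  exact: mono (leq_maxl _ _) Pk.
exact: mono (leq_maxr _ _) (PK y ys).
Qed.

Definition scons (T : Type) (x : T) (f : nat -> T) (n : nat) : T :=
  if n is n'.+1 then f n' else x.

Section Moves.
Variables (Q Sigma : Type).
Implicit Types (ps : nat -> Q) (als : nat -> Sigma).

Definition moves ps als (n : nat) : seq (Sigma * Q) :=
  mkseq (fun i => (als i, ps i.+1)) n.

Lemma moves_scons ps als s c n :
  moves (scons s ps) (scons c als) n.+1 = (c, ps 0) :: moves ps als n.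
Proof. by rewrite /moves /mkseq /= -[in iota 1 n](addn0 1) iotaDl -map_comp. Qed.

Lemma take_moves ps als i n : i <= n -> take i (moves ps als n) = moves ps als i.
Proof. by move=> le_in; rewrite /moves /mkseq -map_take take_iota (minn_idPl le_in). Qed.

Definition answers (rho : seq (Sigma * Q) -> Q) (l : seq (Sigma * Q)) : seq (Sigma * Q) :=
  zip (unzip1 l) [seq rho (take i l) | i <- iota 1 (size l)].

Lemma answers_moves rho ps als n :
  answers rho (moves ps als n) = moves (fun k => rho (moves ps als k)) als n.
Proof.
have size_moves m : size (moves ps als m) = m by rewrite size_mkseq.
have size_answers : size (answers rho (moves ps als n)) = n.
  by rewrite size_zip size_map size_iota size_map size_moves minnn.
apply: (@eq_from_nth _ (als 0, ps 0)) => [|i]; rewrite size_answers ?size_mkseq // => lt_in.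
rewrite nth_zip ?size_map ?size_iota ?size_moves //.
rewrite (nth_map (als 0, ps 0)) ?size_moves // (nth_map 0) ?size_iota //.
by rewrite nth_iota // add1n take_moves // !nth_mkseq.
Qed.

End Moves.

Section ObligationSimulation.
Variables (Q Sigma : finType) (A : BA Q Sigma).
Implicit Types (s t : Q) (c : Sigma) (b : bool) (ps : nat -> Q) (als : nat -> Sigma)
  (rho : seq (Sigma * Q) -> Q).

Definition is_run ps als : Prop := forall i, ps i.+1 \in delta A (ps i) (als i).

Lemma is_run_scons ps als s c :
  is_run ps als -> ps 0 \in delta A s c -> is_run (scons s ps) (scons c als).
Proof. by move=> run ps0 []. Qed.

Definition some_succ s c : Q := odflt s [pick s' in delta A s c].

Lemma some_succP s c : complete A -> some_succ s c \in delta A s c.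
Proof.
rewrite /some_succ => /(_ s c); case: pickP => // none.
by case/eqP; apply/setP => s'; rewrite inE none.
Qed.

Definition next_obl b s t : bool := (b || (s \in final A)) && (t \notin final A).

Definition pending (h : seq (Q * Q)) : bool :=
  foldl (fun b st => next_obl b st.1 st.2) false h.

Lemma pending_rcons h s t : pending (rcons h (s, t)) = next_obl (pending h) s t.
Proof. by rewrite /pending foldl_rcons. Qed.

(* Duplicator strategies that only see Spoiler's moves (Duplicator's own states are
   recomputed from them, which makes composition easy); [b] is an obligation,
   a final state of Spoiler that Duplicator still has to match. *)
Definition hist_winning rho s b : Prop :=
  forall ps als, ps 0 = s -> is_run ps als ->
  [/\ forall i, rho (moves ps als i.+1) \in delta A (rho (moves ps als i)) (als i),
      b -> exists k, rho (moves ps als k) \in final A &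
      forall i, ps i \in final A -> exists2 k, i <= k & rho (moves ps als k) \in final A].

Definition dsim s t b : Prop := exists2 rho, rho [::] = t & hist_winning rho s b.

Lemma hist_winning_ext rho rho' s b :
  rho =1 rho' -> hist_winning rho s b -> hist_winning rho' s b.
Proof.
move=> eq_rho win ps als ps0 run; have [w1 w2 w3] := win ps als ps0 run.
split=> [i|/w2 [k rkF]|i /w3 [k le_ik rkF]]; first by rewrite -!eq_rho.
  by exists k; rewrite -eq_rho.
by exists k; rewrite -?eq_rho.
Qed.

Lemma dsim_le s t b b' : b' ==> b -> dsim s t b -> dsim s t b'.
Proof.
move=> le_b [rho rho0 win]; exists rho => // ps als ps0 run.
have [w1 w2 w3] := win ps als ps0 run; split=> // /(implyP le_b); exact: w2.
Qed.

Lemma dsim_final_obl s t b : dsim s t false -> dsim s t ((s \in final A) && b).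
Proof.
move=> [rho rho0 win]; exists rho => // ps als ps0 run.
have [w1 _ w3] := win ps als ps0 run; split=> // /andP [sF _].
by have [k _ rkF] := w3 0 (etrans (congr1 _ ps0) sF); exists k.
Qed.

Lemma hist_winning_first_move rho s b c s' :
  complete A -> hist_winning rho s b -> s' \in delta A s c ->
  rho [:: (c, s')] \in delta A (rho [::]) c.
Proof.
move=> hc win ss'; pose ps n := iter n (some_succ^~ c) s'.
have run : is_run (scons s ps) (scons c (fun=> c)).
  by apply: is_run_scons => // i; apply: some_succP.
by have [w1 _ _] := win _ _ erefl run; have := w1 0.
Qed.

Lemma hist_winning_residual rho s b c s' :
  hist_winning rho s b -> s' \in delta A s c ->
  hist_winning (fun l => rho ((c, s') :: l)) s' (next_obl b s (rho [::])).
Proof.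
move=> win ss' ps als ps0 run.
have run' : is_run (scons s ps) (scons c als) by apply: is_run_scons; rewrite ?ps0.
have [w1 w2 w3] := win _ _ erefl run'.
have shift n : rho (moves (scons s ps) (scons c als) n.+1) = rho ((c, s') :: moves ps als n).
  by rewrite moves_scons ps0.
split=> [i|/andP [obl rF]|i psF].
- by have := w1 i.+1; rewrite !shift.
- have [k rkF] : exists k, rho (moves (scons s ps) (scons c als) k) \in final A.
    case/orP: obl => [/w2 //|sF]; have [k _ rkF] := w3 0 sF; by exists k.
  by case: k rkF => [|k]; [rewrite (negbTE rF) | rewrite shift; exists k].
- have [[|k] //] := w3 i.+1 psF; rewrite shift => le_ik rkF; by exists k.
Qed.

Lemma dsim_step s t b c s' :
  complete A -> dsim s t b -> s' \in delta A s c ->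
  exists2 t', t' \in delta A t c & dsim s' t' (next_obl b s t).
Proof.
move=> hc [rho <- win] ss'; exists (rho [:: (c, s')]).
  exact: hist_winning_first_move win ss'.
by exists (fun l => rho ((c, s') :: l)) => //; apply: hist_winning_residual.
Qed.

Lemma hist_winning_comp rho1 rho2 s u b1 b2 :
  rho1 [::] = u -> hist_winning rho1 s b1 -> hist_winning rho2 u b2 ->
  hist_winning (fun l => rho2 (answers rho1 l)) s (b1 || b2).
Proof.
move=> rho10 win1 win2 ps als ps0 run.
have [v1 v2 v3] := win1 ps als ps0 run.
pose us k := rho1 (moves ps als k).
have [w1 w2 w3] := win2 us als rho10 v1.
have comp n : rho2 (answers rho1 (moves ps als n)) = rho2 (moves us als n).
  by rewrite answers_moves.
split=> [i|/orP [/v2 [k ukF]|/w2 [k rkF]]|i /v3 [k le_ik /w3 [j le_kj rjF]]].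
- by rewrite !comp.
- by have [j _ rjF] := w3 k ukF; exists j; rewrite comp.
- by exists k; rewrite comp.
- by exists j; [exact: leq_trans le_kj | rewrite comp].
Qed.

Lemma dsim_trans s u t b1 b2 : dsim s u b1 -> dsim u t b2 -> dsim s t (b1 || b2).
Proof.
move=> [rho1 rho10 win1] [rho2 rho20 win2].
by exists (fun l => rho2 (answers rho1 l)); last exact: hist_winning_comp win1 win2.
Qed.

Lemma dup_run_ext (sg : strategy Q Sigma) ps ps' als als' y n :
  (forall i, i <= n -> ps i = ps' i) -> (forall i, i < n -> als i = als' i) ->
  dup_run sg ps als y n = dup_run sg ps' als' y n.
Proof.
elim: n => [//|n IH] eq_ps eq_als /=.
rewrite IH => [|i le_in|i lt_in]; last exact: eq_als (ltnW lt_in).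
  by rewrite !eq_ps ?eq_als // leqW.
exact: eq_ps (leqW le_in).
Qed.

Lemma dup_run_history (sg : strategy Q Sigma) ps als y n :
  (dup_run sg ps als y n).1 = mkseq (fun i => (ps i, (dup_run sg ps als y i).2)) n.
Proof. by elim: n => [//|n IH]; rewrite /= IH mkseqS. Qed.

Definition strategy_hist (sg : strategy Q Sigma) x y (l : seq (Sigma * Q)) : Q :=
  if l is m :: _ then
    (dup_run sg (scons x (fun i => (nth m l i).2)) (fun i => (nth m l i).1) y (size l)).2
  else y.

Lemma strategy_hist_moves (sg : strategy Q Sigma) ps als y n :
  strategy_hist sg (ps 0) y (moves ps als n) = (dup_run sg ps als y n).2.
Proof.
case: n => [//|n].
have [m [l El]] : exists m l, moves ps als n.+1 = m :: l by do 2 eexists.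
rewrite /strategy_hist El -El size_mkseq; congr (_.2).
apply: dup_run_ext => [[|i] le_in|i lt_in] //=; by rewrite nth_mkseq.
Qed.

Lemma delayed_sim_dsim x y : delayed_sim A x y -> dsim x y false.
Proof.
move=> [sg win]; exists (strategy_hist sg x y) => // ps als ps0 run.
have [w1 w2] := win ps als ps0 run; rewrite -ps0.
split=> // [i|i /w2 [k [le_ik rkF]]]; rewrite ?strategy_hist_moves //.
by exists k; rewrite ?strategy_hist_moves.
Qed.

Fixpoint discharge_within (k : nat) s t : Prop :=
  if k is k'.+1 then
    forall c s', s' \in delta A s c -> exists2 t', t' \in delta A t c &
      dsim s' t' true /\ (t' \in final A \/ discharge_within k' s' t')
  else False.

Lemma discharge_within_mono k k' s t :
  k <= k' -> discharge_within k s t -> discharge_within k' s t.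
Proof.
elim: k k' s t => [//|k IH] [//|k'] s t /= le_kk' disch c s' ss'.
have [t' tt' [s't' fin]] := disch c s' ss'; exists t' => //; split=> //.
by case: fin => [|disch']; [left | right; exact: IH disch'].
Qed.

Lemma discharge_within_trans k p q t :
  complete A -> dsim p q false -> discharge_within k q t -> discharge_within k p t.
Proof.
move=> hc; elim: k p q t => [//|k IH] p q t pq /= disch c p' pp'.
have [q' qq' /(dsim_le (implyFb _)) p'q'] := dsim_step hc pq pp'.
have [t' tt' [q't' fin]] := disch c q' qq'; exists t' => //.
split; first exact: dsim_trans p'q' q't'.
by case: fin => [|disch']; [left | right; exact: IH p'q' disch'].
Qed.

Lemma escape_move s t :
  (forall k, ~ discharge_within k s t) ->
  exists m : Sigma * Q, m.2 \in delta A s m.1 /\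
    forall t', t' \in delta A t m.1 -> dsim m.2 t' true ->
      t' \notin final A /\ forall k, ~ discharge_within k m.2 t'.
Proof.
move=> nodisch; apply: NNPP => noescape.
pose P (m : Sigma * Q) k := m.2 \in delta A s m.1 -> exists2 t', t' \in delta A t m.1 &
  dsim m.2 t' true /\ (t' \in final A \/ discharge_within k m.2 t').
have [K PK] : exists K, forall m, P m K.
  apply: fin_uniform_bound => [m k k' le_kk' Pk /Pk [t' tt' [s't' fin]]|m].
    exists t' => //; split=> //.
    by case: fin => [|/(discharge_within_mono le_kk')]; [left | right].
  apply: NNPP => noP; apply: noescape; exists m; split.
    by apply: NNPP => nsm; apply: noP; exists 0 => /nsm.
  move=> t' tt' s't'; split.
    by apply/negP => t'F; apply: noP; exists 0 => _; exists t'; auto.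
  by move=> k disch; apply: noP; exists k => _; exists t'; auto.
by apply: (nodisch K.+1) => c s' ss'; apply: (PK (c, s')).
Qed.

Lemma escape_play (Inv : Q -> seq (Sigma * Q) -> Prop) s :
  Inv s [::] ->
  (forall s l, Inv s l ->
     exists m : Sigma * Q, m.2 \in delta A s m.1 /\ Inv m.2 (rcons l m)) ->
  exists ps als, [/\ ps 0 = s, is_run ps als & forall n, Inv (ps n) (moves ps als n)].
Proof.
move=> Inv0 step; have [m0 _] := step _ _ Inv0.
pose good (sl : Q * seq (Sigma * Q)) m := m.2 \in delta A sl.1 m.1 /\ Inv m.2 (rcons sl.2 m).
pose next sl := epsilon (inhabits m0) (good sl).
have nextP sl : Inv sl.1 sl.2 -> good sl (next sl).
  by move=> inv; apply: epsilon_spec; apply: step.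
pose pos n := iter n (fun sl => ((next sl).2, rcons sl.2 (next sl))) (s, [::]).
pose ps n := (pos n).1; pose als n := (next (pos n)).1.
have pos2 n : (pos n).2 = moves ps als n.
  elim: n => [//|n IH]; rewrite [in RHS]/moves mkseqS -/(moves _ _ _) -IH /ps /als /=.
  by case: (next (pos n)).
have inv n : Inv (ps n) (pos n).2.
  by elim: n => [//|n IH]; have [_] := nextP _ IH.
exists ps, als; split=> // [i|n]; last by rewrite -pos2.
by have [] := nextP _ (inv i).
Qed.

Lemma dsim_true_discharge s t :
  complete A -> dsim s t true -> t \notin final A -> exists k, discharge_within k s t.
Proof.
move=> hc [rho rho0 win] tF; apply: NNPP => nodisch.
pose Inv s' l := [/\ forall k, ~ discharge_within k s' (rho l), rho l \notin final A &
  hist_winning (fun l' => rho (l ++ l')) s' true].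
have [ps [als [ps0 run inv]]] : exists ps als,
    [/\ ps 0 = s, is_run ps als & forall n, Inv (ps n) (moves ps als n)].
  apply: escape_play => [|s' l [nodisch' rlF win']].
    by split; rewrite ?rho0 // => k disch; apply: nodisch; exists k.
  have [[c s''] /= [s's'' escape]] := escape_move nodisch'.
  set l' := rcons l (c, s'').
  have step : rho l' \in delta A (rho l) c.
    by have := hist_winning_first_move hc win' s's''; rewrite cats0 cats1.
  have win'' : hist_winning (fun l'' => rho (l' ++ l'')) s'' true.
    have := hist_winning_residual win' s's''; rewrite /next_obl cats0 rlF.
    by apply: hist_winning_ext => l''; rewrite cat_rcons.
  have s''l' : dsim s'' (rho l') true by exists (fun l'' => rho (l' ++ l'')); rewrite ?cats0.
  by have [rF nodisch''] := escape _ step s''l'; exists (c, s'').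
have [_ /(_ isT) [k rkF] _] := win ps als ps0 run.
by have [_ ] := inv k; rewrite rkF.
Qed.

Lemma obligation_discharged (ps rs : nat -> Q) (obl : nat -> bool) :
  (forall n, obl n.+1 = next_obl (obl n) (ps n.+1) (rs n.+1)) ->
  (forall n, obl n -> rs n.+1 \in final A \/
     forall k, discharge_within k.+1 (ps n) (rs n) -> discharge_within k (ps n.+1) (rs n.+1)) ->
  forall k i, obl i -> discharge_within k (ps i) (rs i) ->
  exists2 j, i <= j & rs j \in final A.
Proof.
move=> oblS progress; elim=> [//|k IH] i obli disch.
have [rF|disch'] := progress i obli; first by exists i.+1.
case rF: (rs i.+1 \in final A); first by exists i.+1.
have obli1 : obl i.+1 by rewrite oblS /next_obl obli rF.
by have [j le_ij rjF] := IH i.+1 obli1 (disch' k disch); exists j => //; exact: ltnW.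
Qed.

Definition good_answer b s t s' t' : Prop :=
  dsim s' t' (next_obl b s' t') /\
  (b -> t' \in final A \/
     forall k, discharge_within k.+1 s t -> discharge_within k s' t').

Lemma good_answer_exists b s t c s' :
  complete A -> dsim s t b -> (b -> t \notin final A) -> s' \in delta A s c ->
  exists2 t', t' \in delta A t c & good_answer b s t s' t'.
Proof.
move=> hc; case: b => st tF ss'; last first.
  have [t' tt' /(dsim_le (implyFb _)) s't'] := dsim_step hc st ss'.
  by exists t' => //; split=> //; apply: dsim_final_obl.
have [[|k] disch mink] := ex_minP (dsim_true_discharge hc st (tF isT)); first by [].
have [t' tt' [s't' fin]] := disch c s' ss'; exists t' => //.
split=> [|_]; first exact: dsim_le (implybT _) s't'.
case: fin => [|disch']; [by left | right=> k' /mink].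
rewrite ltnS => le_kk'.
exact: discharge_within_mono le_kk' disch'.
Qed.

Lemma good_answer_trans b s t p q t' :
  complete A -> dsim p q false -> good_answer b s t q t' -> good_answer b s t p t'.
Proof.
move=> hc pq [qt' progress]; split; last first.
  move=> /progress [|fin]; [by left | right=> k /fin; exact: discharge_within_trans].
case: b qt' {progress} => qt'; first exact: dsim_trans pq qt'.
exact/dsim_final_obl/(dsim_le (implyFb _))/(dsim_trans pq qt').
Qed.

End ObligationSimulation.

Section AddTransition.
Variables (Q Sigma : finType) (A : BA Q Sigma) (p q r : Q) (a : Sigma).
Hypotheses (hc : complete A) (qra : q \in delta A r a) (pq : dsim A p q false).
Local Notation B := (add_transition A r a p).

Lemma delta_add_transitionP s c s' :
  s' \in delta B s c -> s' \in delta A s c \/ [/\ s = r, c = a & s' = p].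
Proof.
rewrite /= /add_trans; case: ifP => [/andP [/eqP -> /eqP ->]|_]; last by left.
by case/setU1P => [->|]; [right | left].
Qed.

Lemma delta_add_transition_sub s c : {subset delta A s c <= delta B s c}.
Proof. by move=> s'; rewrite /= /add_trans; case: ifP => // _; rewrite inE orbC => ->. Qed.

Lemma good_answer_add_transition b s t c s' :
  dsim A s t b -> (b -> t \notin final A) -> s' \in delta B s c ->
  exists2 t', t' \in delta B t c & good_answer A b s t s' t'.
Proof.
move=> st tF /delta_add_transitionP [ss' | [Es Ec ->]]; last subst s c.
  by have [t' /delta_add_transition_sub] := good_answer_exists hc st tF ss'; exists t'.
have [t' /delta_add_transition_sub tt' good] := good_answer_exists hc st tF qra.
by exists t' => //; exact: good_answer_trans hc pq good.
Qed.

Definition extended_strategy : strategy Q Sigma := fun h s t c s' =>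
  epsilon (inhabits t)
    (fun t' => t' \in delta B t c /\ good_answer A (pending A (rcons h (s, t))) s t s' t').

Lemma extended_strategyP h s t c s' (b := pending A (rcons h (s, t))) :
  dsim A s t b -> s' \in delta B s c ->
  let t' := extended_strategy h s t c s' in t' \in delta B t c /\ good_answer A b s t s' t'.
Proof.
move=> st ss'.
apply: (epsilon_spec (inhabits t) (fun t' => t' \in delta B t c /\ good_answer A b s t s' t')).
have tF : b -> t \notin final A by rewrite /b pending_rcons => /andP [].
by have [t' tt' good] := good_answer_add_transition st tF ss'; exists t'; split.
Qed.

Section Play.
Variables (x y : Q) (ps : nat -> Q) (als : nat -> Sigma).
Hypotheses (xy : dsim A x y false) (ps0 : ps 0 = x) (run : is_run B ps als).

Let rs n := (dup_run extended_strategy ps als y n).2.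
Let hist n := mkseq (fun i => (ps i, rs i)) n.
Let obl n := pending A (hist n.+1).

Lemma oblE n : obl n = next_obl A (pending A (hist n)) (ps n) (rs n).
Proof. by rewrite /obl /hist mkseqS pending_rcons. Qed.

Lemma extended_strategy_step n :
  dsim A (ps n) (rs n) (obl n) ->
  rs n.+1 \in delta B (rs n) (als n) /\ good_answer A (obl n) (ps n) (rs n) (ps n.+1) (rs n.+1).
Proof.
move=> inv; have -> : rs n.+1 = extended_strategy (hist n) (ps n) (rs n) (als n) (ps n.+1).
  by rewrite /rs /= dup_run_history.
by move: inv; rewrite /obl /hist mkseqS => /extended_strategyP; apply.
Qed.

Lemma extended_strategy_invariant n : dsim A (ps n) (rs n) (obl n).
Proof.
elim: n => [|n IH]; first by rewrite oblE /= ps0; apply: dsim_final_obl.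
by rewrite oblE; have [_ []] := extended_strategy_step IH.
Qed.

Lemma extended_strategy_matches_final i :
  ps i \in final A -> exists2 k, i <= k & rs k \in final A.
Proof.
move=> psF; case rF: (rs i \in final A); first by exists i.
have obli : obl i by rewrite oblE /next_obl psF rF orbT.
have inv := extended_strategy_invariant i; rewrite obli in inv.
have [k disch] := dsim_true_discharge hc inv (negbT rF).
apply: (obligation_discharged (obl := obl) _ _ obli disch) => n; first exact: oblE.
move=> obln; have [_ [_ progress]] := extended_strategy_step (extended_strategy_invariant n).
exact: progress obln.
Qed.

End Play.

Lemma extended_strategy_winning x y :
  dsim A x y false -> delayed_winning B extended_strategy x y.
Proof.
move=> xy ps als ps0 run; split=> i.
  by have [] := extended_strategy_step run (extended_strategy_invariant xy ps0 run i).
by case/(extended_strategy_matches_final xy ps0 run) => k; exists k.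
Qed.

End AddTransition.

Theorem lemma12 (Q Sigma : finType) (A : BA Q Sigma) (p q r : Q) (a : Sigma) :
  complete A ->
  q \in delta A r a ->
  delayed_sim A p q ->
  forall x y : Q, delayed_sim A x y -> delayed_sim (add_transition A r a p) x y.
Proof.
move=> hc qra /delayed_sim_dsim pq x y /delayed_sim_dsim xy.
by exists (extended_strategy A p r a); exact (extended_strategy_winning hc qra pq xy).
Qed.
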